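(* Let $(\Delta_0,\mathfrak o_0,m_0,q_0)$ be a quantized Brauer graph. Then there is a tower of quantized Brauer covering graphs $(\Delta_0,\mathfrak o_0,m_0,q_0),(\Delta_1,\mathfrak o_1,m_1,q_1),(\Delta_2,\mathfrak o_2,m_2,q_2),(\Delta_3,\mathfrak o_3,m_3,q_3)$ such that: (1) the multiplicity function $m_3$ is identically $1$; (2) the graph $\Delta_3$ has no loops; (3) the graph $\Delta_3$ has no multiple edges.
   Context: Brauer graphs. A Brauer graph $(\Delta,\mathfrak o,m)$ is a finite connected graph $\Delta$ (loops and multiple edges allowed) with vertex set (here written) $V(\Delta)$, edge set $E(\Delta)$ and at least one edge, together with a multiplicity function $m:V(\Delta)\to\mathbb Z_{\ge 1}$ and, for each vertex $\mu$, a cyclic ordering $\mathfrak o$ of the edges incident with $\mu$. A loop at $\mu$ occurs twice in the cyclic ordering at $\mu$; its two occurrences are regarded as two distinct edges (each with its own successor). Edge $j$ is the successor of edge $i$ at $\mu$ if $j$ immediately follows $i$ in the cyclic ordering at $\mu$. The valency $\operatorname{val}(\mu)$ is the number of edges incident with $\mu$, loops counted twice; if $\operatorname{val}(\mu)=1$ the unique edge at $\mu$ is its own successor. An edge $i$ is truncated at its endpoint $\mu$ if $\operatorname{val}(\mu)=1$ and $m(\mu)=1$. Fix a field $K$. A quantized Brauer graph $(\Delta,\mathfrak o,m,q)$ is a Brauer graph with a function $q:\mathcal X_\Delta\to K\setminus\{0\}$, $(i,\mu)\mapsto q_{i,\mu}$, where $\mathcal X_\Delta$ is the set of pairs $(i,\mu)$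 with $\mu$ an endpoint of $i$ and $i$ not truncated at either of its endpoints. Successor weightings. Let $G$ be a finite abelian group. For a vertex $\mu$ let $\mathcal Z_\mu$ be the set of pairs $(i,j)$ of edges with $j$ the successor of $i$ at $\mu$, and $\mathcal Z_\Delta=\bigsqcup_{\mu}\mathcal Z_\mu$ (disjoint union). A successor weighting is a function $W:\mathcal Z_\Delta\to G$. Put $\omega_\mu=\prod_{(i,j)\in\mathcal Z_\mu}W(i,j)$, let $\operatorname{ord}(\mu)$ be the order of $\omega_\mu$ in $G$, and $H_\mu=\langle\omega_\mu\rangle$. $W$ is a Brauer weighting if $\operatorname{ord}(\mu)$ divides $m(\mu)$ for all vertices $\mu$. For each $\mu$, $\sim$ is the equivalence relation on the set of pairs $(i,H_\mu g)$ ($i$ incident with $\mu$, $g\in G$) generated by $(i,H_\mu g)\sim(j,H_\mu gW(i,j))$ whenever $j$ is the successor of $i$ at $\mu$; the class of $(i,H_\mu g)$ is $[i,H_\mu g]$, and $\mathcal D_\mu$ is the set of classes. Brauer covering graph. The graph $\Delta_W$ has vertices $\mu_d$ ($\mu$ a vertex of $\Delta$, $d\in\mathcal D_\mu$) and edges $i_g$ ($i$ an edge of $\Delta$, $g\in G$). If $i$ has endpoints $\mu$ and $\nu$, then $i_g$ has endpoints $\mu_{[i,H_\mu g]}$ and $\nu_{[i,H_\nu g]}$; if $i$ is a loop at $\mu$ with its two occurrences $i,\hat i$, then $i_g$ has endpoints $\mu_{[i,H_\mu g]}$ and $\mu_{[\hat i,H_\mu g]}$. The cyclic ordering $\mathfrak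 o_W$ is defined by: if $j$ is the successor of $i$ at $\mu$, then $j_{gW(i,j)}$ is the successor of $i_g$ at $\mu_{[i,H_\mu g]}$. For a Brauer weighting, $m_W(\mu_d)=m(\mu)/\operatorname{ord}(\mu)$. Given a quantizing function $q$ on $\Delta$, $q_W(i_g,\mu_d)=q_{i,\mu}$, and $(\Delta_W,\mathfrak o_W,m_W,q_W)$ is the quantized Brauer covering graph. Towers. A sequence $(\Delta_0,\mathfrak o_0,m_0,q_0),\dots,(\Delta_n,\mathfrak o_n,m_n,q_n)$ of quantized Brauer graphs is a tower of quantized Brauer covering graphs if for each $1\le k\le n$ there are a finite abelian group $G_k$ and a Brauer weighting $W_k:\mathcal Z_{\Delta_{k-1}}\to G_k$ of $(\Delta_{k-1},\mathfrak o_{k-1},m_{k-1},q_{k-1})$ such that $(\Delta_k,\mathfrak o_k,m_k,q_k)$ is the quantized Brauer covering graph associated to $W_k$. *)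

From HB Require Import structures.
From mathcomp Require Import all_boot all_order all_algebra all_fingroup.
Set Implicit Arguments. Unset Strict Implicit. Unset Printing Implicit Defensive.

(* Edges [qE], vertices [qV]; every edge [e] has two ends (half-edges)
   [(e, true)] and [(e, false)], with endpoints [qend e true], [qend e false].
   A loop is an edge whose two ends have the same endpoint; its two ends are
   the two occurrences of the loop in the cyclic ordering.
   The cyclic ordering at each vertex is encoded by the successor map [qsucc]
   on half-edges: it is a permutation preserving the endpoint whose
   restriction to the half-edges at each vertex is a single cycle
   (succ h = h when the valency is 1).
   The quantizing function is a total function [qq : qE -> qV -> K], only
   its values on X_Delta are meaningful (required nonzero there). *)

Section Basic.
Variables (E V : finType) (endp : E -> bool -> V) (mult : V -> nat).

Definition half_end (h : E * bool) : V := endp h.1 h.2.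

Definition valency (mu : V) : nat := #|[pred h : E * bool | half_end h == mu]|.

Definition truncated_at (mu : V) : bool := (valency mu == 1) && (mult mu == 1).

Definition inX (i : E) (mu : V) : bool :=
  [&& (endp i true == mu) || (endp i false == mu),
      ~~ truncated_at (endp i true) & ~~ truncated_at (endp i false)].

Definition adjv : rel V := fun u v =>
  [exists e, ((endp e true == u) && (endp e false == v))
          || ((endp e false == u) && (endp e true == v))].
End Basic.

Record QBrauerGraph (K : fieldType) := QBG {
  qE : finType;
  qV : finType;
  qend : qE -> bool -> qV;
  qsucc : qE * bool -> qE * bool;
  qmult : qV -> nat;
  qq : qE -> qV -> K;
  qE_nonempty : 0 < #|qE|;
  qconnected : forall u v : qV, connect (adjv qend) u v;
  qsucc_inj : injective qsucc;
  qsucc_end : forall h, half_end qend (qsucc h) = half_end qend h;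
  qsucc_cycle : forall h h', half_end qend h = half_end qend h' ->
                             fconnect qsucc h h';
  qmult_pos : forall v, 0 < qmult v;
  qq_nz : forall i mu, inX qend qmult i mu -> qq i mu != (0 : K)%R
}.

Arguments qend {K} q _ _.
Arguments qsucc {K} q _.
Arguments qmult {K} q _.
Arguments qq {K} q _ _.

Section Covering.
Variables (K : fieldType) (B : QBrauerGraph K) (gT : finGroupType).
(* A successor weighting: the pair (h, succ h) of Z_Delta is indexed by h. *)
Variable W : qE B * bool -> gT.

Definition hend (h : qE B * bool) : qV B := half_end (qend B) h.

Definition omega (mu : qV B) : gT := (\prod_(h | hend h == mu) W h)%g.

Definition brauer_weighting : Prop :=
  forall mu : qV B, (#[omega mu]%g %| qmult B mu)%N.

(* generating relation of ~ on pairs (half-edge, coset) *)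
Definition simgen : rel ((qE B * bool) * {set gT}) := fun x y =>
  (y.1 == qsucc B x.1) && (y.2 == (x.2 :* W x.1)%g).

Definition simcls (mu : qV B) (h1 : qE B * bool) (g1 : gT)
                  (h2 : qE B * bool) (g2 : gT) : bool :=
  connect (fun x y => simgen x y || simgen y x)
          (h1, (<[omega mu]> :* g1)%g) (h2, (<[omega mu]> :* g2)%g).

(* B' is (isomorphic to) the quantized Brauer covering graph associated to W:
   phi identifies the edges of B' with the i_g = (i, g). *)
Definition is_covering (B' : QBrauerGraph K) : Prop :=
  exists phi : qE B' -> qE B * gT,
  [/\ bijective phi,
      (forall e' b,
         (phi (qsucc B' (e', b)).1
            = ((qsucc B ((phi e').1, b)).1, ((phi e').2 * W ((phi e').1, b))%g))
         /\ (qsucc B' (e', b)).2 = (qsucc B ((phi e').1, b)).2),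
      (* vertices: the end of i_g on side b is mu_[ (i,b), H_mu g ] *)
      (forall e1 b1 e2 b2,
         qend B' e1 b1 = qend B' e2 b2 <->
         (qend B (phi e1).1 b1 = qend B (phi e2).1 b2 /\
          simcls (qend B (phi e1).1 b1) ((phi e1).1, b1) (phi e1).2
                                        ((phi e2).1, b2) (phi e2).2)),
      (forall e' b,
         qmult B' (qend B' e' b)
           = (qmult B (qend B (phi e').1 b) %/ #[omega (qend B (phi e').1 b)]%g)%N)
    &
      (forall e' b, inX (qend B') (qmult B') e' (qend B' e' b) ->
         qq B' e' (qend B' e' b) = qq B (phi e').1 (qend B (phi e').1 b))].
End Covering.

Definition covering_step (K : fieldType) (B B' : QBrauerGraph K) : Prop :=
  exists (gT : finGroupType) (W : qE B * bool -> gT),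
    [/\ abelian [set: gT], brauer_weighting W & is_covering W B'].

Definition no_loops (K : fieldType) (B : QBrauerGraph K) : Prop :=
  forall e : qE B, qend B e true != qend B e false.

Definition no_multiple_edges (K : fieldType) (B : QBrauerGraph K) : Prop :=
  forall e1 e2 : qE B, e1 != e2 ->
    ~~ (((qend B e1 true == qend B e2 true) && (qend B e1 false == qend B e2 false))
     || ((qend B e1 true == qend B e2 false) && (qend B e1 false == qend B e2 true))).

From HB Require Import structures.
From mathcomp Require Import all_boot all_order all_algebra all_fingroup.
From mathcomp Require Import all_solvable.
Set Implicit Arguments. Unset Strict Implicit. Unset Printing Implicit Defensive.
Import GRing.Theory.
Local Open Scope ring_scope.

(* For a
   Brauer weighting W we construct the covering graph explicitly ([cover]):
   its edges are the pairs (i, g), and its vertices are the classes of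
   "lifted half-edges" ((i, b), g) under the relation generated by the
   successor ((i, b), g) -> (succ (i, b), g + W (i, b)) and the translation
   g -> omega_mu + g; these classes are the [i, H_mu g] of the paper.  The
   construction needs connectivity, which reduces to showing that the labels
   reachable over one fixed half-edge form all of V ([fibre_full_connected]).
   Three weightings are then used:
   - [mweight], with values in Z/L (L the lcm of all multiplicities), puts an
     element of order m(mu) at one half-edge of each vertex mu; its cover has
     all multiplicities 1 ([multcover]);
   - the zero weighting on the trivial group, giving the middle step;
   - the coboundary of a potential which labels the edges injectively in
     Z/N with no two labels summing to 0; its cover has neither loops nor
     multiple edges ([simplecover]), and is connected as soon as Delta has a
     loop or a pair of parallel edges; otherwise Delta is already simple. *)

Lemma connect_homo (T1 T2 : finType) (e1 : rel T1) (e2 : rel T2) (f : T1 -> T2) :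
  (forall x y, e1 x y -> connect e2 (f x) (f y)) ->
  forall x y, connect e1 x y -> connect e2 (f x) (f y).
Proof.
move=> f_homo x _ /connectP[p e_p ->].
elim: p x e_p => [|y p IHp] x /=; first by rewrite connect0.
by case/andP=> /f_homo x_y /IHp; apply: connect_trans.
Qed.

Lemma exists_half_edge (K : fieldType) (B : QBrauerGraph K) (mu : qV B) :
  exists h : qE B * bool, hend h = mu.
Proof.
have /card_gt0P [e0 _] := qE_nonempty B.
have /connectP [p p_path ->] := qconnected (qend B e0 true) mu.
case/lastP: p p_path => [|p w]; first by exists (e0, true).
rewrite rcons_path last_rcons => /andP[_ /existsP[e he]].
by case/orP: he => /andP[_ /eqP e2]; [exists (e, false) | exists (e, true)].
Qed.

Section HalfEdges.
Variables (K : fieldType) (B : QBrauerGraph K).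

Lemma hend_succ (h : qE B * bool) : hend (qsucc B h) = hend h.
Proof. exact: qsucc_end. Qed.

Lemma fconnect_hend (h h' : qE B * bool) :
  fconnect (qsucc B) h h' = (hend h' == hend h).
Proof.
apply/idP/idP => [h_h'|/eqP/esym]; last exact: qsucc_cycle.
rewrite (fconnect_invariant (k := @hend K B) _ h_h') // => z.
by rewrite /= hend_succ eqxx.
Qed.

Lemma valency1_unique (h0 h : qE B * bool) :
  valency (qend B) (hend h0) = 1%N -> hend h = hend h0 -> h = h0.
Proof.
move=> /eqP/card1P [z hz] hh; have := hz h; have := hz h0.
by rewrite !inE /= -/(hend h0) -/(hend h) hh eqxx => /esym/eqP -> /esym/eqP.
Qed.

End HalfEdges.

Section CoveringGraph.
Variables (K : fieldType) (B : QBrauerGraph K) (V : finZmodType).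
Variable W : qE B * bool -> V.

(* A lifted half-edge ((i, b), g) is the end b of the edge i_g of the cover. *)
Definition lift := ((qE B * bool) * V)%type.

Definition omegaV (mu : qV B) : V := omega (W : _ -> (V : finGroupType)) mu.

Lemma omegaVE mu : omegaV mu = \sum_(h | hend h == mu) W h.
Proof. by []. Qed.

Definition lsucc (x : lift) : lift := (qsucc B x.1, x.2 + W x.1).

(* Generating steps of "same vertex of the cover": the successor, and the
   translation by omega_mu (the label is only defined modulo H_mu). *)
Definition vstep1 (x y : lift) : bool :=
  (y == lsucc x) || (y == (x.1, omegaV (hend x.1) + x.2)).
Definition vstep : rel lift := fun x y => vstep1 x y || vstep1 y x.

Definition lflip (x : lift) : lift := ((x.1.1, ~~ x.1.2), x.2).

Definition lstep : rel lift := fun x y => vstep x y || (y == lflip x).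

Lemma vstep_sym : symmetric vstep.
Proof. by move=> x y; rewrite /vstep orbC. Qed.

Lemma connect_vstep_sym : connect_sym vstep.
Proof. exact: sym_connect_sym vstep_sym. Qed.

Lemma lstep_sym : symmetric lstep.
Proof.
move=> x y; rewrite /lstep vstep_sym; congr (_ || _).
case: x y => [[e b] g] [[e' b'] g']; rewrite /lflip /=.
by apply/eqP/eqP => -[-> -> ->]; rewrite ?negbK.
Qed.

Lemma connect_lstep_sym : connect_sym lstep.
Proof. exact: sym_connect_sym lstep_sym. Qed.

Lemma connect_vstep_lstep x y : connect vstep x y -> connect lstep x y.
Proof. by apply: connect_sub => u v uv; apply: connect1; rewrite /lstep uv. Qed.

Lemma lflip_lstep e b g : connect lstep ((e, b), g) ((e, ~~ b), g).
Proof. by apply: connect1; rewrite /lstep /lflip eqxx orbT. Qed.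

Lemma vstep_hend x y : vstep x y -> hend y.1 = hend x.1.
Proof.
by rewrite /vstep /vstep1 => /orP[/orP[]|/orP[]] /eqP -> //=; rewrite hend_succ.
Qed.

Lemma connect_vstep_hend x y : connect vstep x y -> hend y.1 = hend x.1.
Proof.
move=> x_y; have cl : closed vstep [pred z : lift | hend z.1 == hend x.1].
  apply: intro_closed; first exact: connect_vstep_sym.
  by move=> a b /vstep_hend; rewrite !inE => ->.
by have := closed_connect cl x_y; rewrite !inE eqxx => /esym/eqP.
Qed.

Lemma iter_lsucc n h g :
  iter n lsucc (h, g) = (iter n (qsucc B) h, g + \sum_(k < n) W (iter k (qsucc B) h)).
Proof.
elim: n => [|n IH]; first by rewrite big_ord0 addr0.
by rewrite iterS IH /lsucc /= big_ord_recr /= addrA.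
Qed.

Lemma lsucc_full_turn h g :
  iter (fingraph.order (qsucc B) h) lsucc (h, g) = (h, omegaV (hend h) + g).
Proof.
rewrite iter_lsucc iter_order; last exact: qsucc_inj.
rewrite addrC omegaVE -[in RHS]big_filter; congr (_, _ + _).
have -> : \sum_(k < fingraph.order (qsucc B) h) W (iter k (qsucc B) h)
        = \sum_(y <- fingraph.orbit (qsucc B) h) W y.
  rewrite /fingraph.orbit; elim: (fingraph.order _ _) => [|n IH].
    by rewrite big_ord0 big_nil.
  by rewrite big_ord_recr trajectSr big_rcons /= IH addrC.
apply: perm_big; apply: uniq_perm; first exact: orbit_uniq.
  by rewrite filter_uniq // index_enum_uniq.
by move=> y; rewrite -fconnect_orbit fconnect_hend mem_filter mem_index_enum andbT.
Qed.

Lemma lsucc_inj : injective lsucc.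
Proof. by case=> h g [h' g'] [/qsucc_inj -> /addIr ->]. Qed.

Lemma connect_vstep_fconnect x y : connect vstep x y -> fconnect lsucc x y.
Proof.
have step1 a b : vstep1 a b -> fconnect lsucc a b.
  case/orP => /eqP ->; first exact: fconnect1.
  by case: a => h g; rewrite -lsucc_full_turn; apply: fconnect_iter.
apply: connect_sub => a b /orP[/step1 //|/step1].
by rewrite fconnect_sym //; exact: lsucc_inj.
Qed.

Lemma same_vertex_lift h h' : hend h = hend h' ->
  exists c, forall g, connect vstep (h, g) (h', g + c).
Proof.
move=> hh; have /iter_findex : fconnect (qsucc B) h h' by rewrite fconnect_hend hh.
set n := findex _ _ _ => iter_n.
exists (\sum_(k < n) W (iter k (qsucc B) h)) => g.
rewrite -iter_n -iter_lsucc.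
apply: connect_sub (fconnect_iter _ _ _) => u v /eqP <-; apply: connect1.
by rewrite /vstep /vstep1 eqxx.
Qed.

(* The vertices of the cover are the vstep-classes, represented by roots. *)
Definition cvertex := {x : lift | fingraph.root vstep x == x}.

Definition cvx (x : lift) : cvertex :=
  exist _ (fingraph.root vstep x) (introT eqP (root_root connect_vstep_sym x)).

Lemma cvx_eq x y : cvx x = cvx y <-> connect vstep x y.
Proof.
split => [cx_cy | x_y]; last by apply: val_inj => /=; apply/(fingraph.rootP connect_vstep_sym).
by apply/(fingraph.rootP connect_vstep_sym); move: cx_cy => /(congr1 val).
Qed.

Lemma cvx_val (v : cvertex) : cvx (val v) = v.
Proof. by apply: val_inj => /=; case: v => x /= /eqP. Qed.

Definition cbase (v : cvertex) : qV B := hend (val v).1.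

Lemma cbase_cvx x : cbase (cvx x) = hend x.1.
Proof. by rewrite /cbase /= (connect_vstep_hend (connect_root _ x)). Qed.

Local Notation simstep := (fun a b => simgen (W : _ -> (V : finGroupType)) a b
                                   || simgen (W : _ -> (V : finGroupType)) b a).

Definition hcoset (mu : qV B) (g : V) : {set V} := (<[omegaV mu : V]> :* (g : V))%g.

Lemma hcoset_omega mu g : hcoset mu (omegaV mu + g) = hcoset mu g.
Proof.
rewrite /hcoset; change (omegaV mu + g) with (omegaV mu * g)%g.
by rewrite rcosetM rcoset_id // cycle_id.
Qed.

Lemma hcosetD mu g w : hcoset mu (g + w) = (hcoset mu g :* w)%g.
Proof. by rewrite /hcoset; change (g + w) with (g * w)%g; rewrite rcosetM. Qed.

Lemma vstep_simstep mu x y : hend x.1 = mu -> vstep x y ->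
  connect simstep (x.1, hcoset mu x.2) (y.1, hcoset mu y.2).
Proof.
case: x y => [h g] [h' g'] /= <-; rewrite /vstep /vstep1 /lsucc /= !xpair_eqE.
case/orP => /orP[] /andP[/eqP -> /eqP ->]; rewrite ?hcoset_omega ?connect0 //.
  by apply: connect1; rewrite /simgen /= eqxx hcosetD eqxx.
by apply: connect1; rewrite /simgen /= eqxx hcosetD eqxx orbT.
Qed.

Lemma connect_vstep_simstep x y : connect vstep x y ->
  connect simstep (x.1, hcoset (hend x.1) x.2) (y.1, hcoset (hend x.1) y.2).
Proof.
move=> /connectP[p]; elim: p x => [|z p IH] x /=; first by move=> _ ->.
case/andP=> x_z z_p y_last; apply: connect_trans (vstep_simstep erefl x_z) _.
by rewrite -(vstep_hend x_z); apply: IH.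
Qed.

(* Conversely, along a ~-path starting from (x.1, H_mu x.2), every pair is
   (h, H_mu g) for some lift (h, g) vstep-connected to x. *)
Definition reached (mu : qV B) (x : lift) (a : (qE B * bool) * {set V}) : Prop :=
  exists g, a.2 = hcoset mu g /\ connect vstep x (a.1, g).

Lemma simstep_reached mu x a b : reached mu x a -> simstep a b -> reached mu x b.
Proof.
case: a b => [a1 a2] [b1 b2] [g /= [-> x_a]]; rewrite /simgen /=.
case/orP => /andP[/eqP b1E /eqP b2E].
  exists (g + W a1); rewrite hcosetD b2E; split => //.
  by apply: connect_trans x_a (connect1 _); rewrite /vstep /vstep1 /lsucc /= b1E eqxx.
exists (g - W b1); split.
  by rewrite -[b2](rcosetK (W b1)) -b2E -hcosetD.
apply: connect_trans x_a (connect1 _).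
by rewrite /vstep /vstep1 /lsucc /= b1E subrK eqxx orbT.
Qed.

(* Hence ~-equivalent lifts over the same vertex are vertex-equivalent: the
   coset H_mu g is reached by translating by powers of omega_mu. *)
Lemma connect_simstep_vstep x y : hend x.1 = hend y.1 ->
  connect simstep (x.1, hcoset (hend x.1) x.2) (y.1, hcoset (hend x.1) y.2) ->
  connect vstep x y.
Proof.
move=> hxy /connectP[p]; set mu := hend x.1; set a0 := (x.1, _) => p_path y_last.
have reach a : reached mu x a -> path simstep a p -> reached mu x (last a p).
  elim: p {p_path y_last} a => [|b p IH] a //= x_a /andP[a_b b_p].
  exact: IH (simstep_reached x_a a_b) b_p.
have [g [y_g x_g]] : reached mu x (last a0 p).
  by apply: reach p_path; exists x.2; rewrite /= -surjective_pairing connect0.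
rewrite -y_last /= in y_g x_g.
have /rcosetP [a /cycleP[n ->] y2E] : y.2 \in hcoset mu g.
  by rewrite -y_g /hcoset rcoset_refl.
apply: connect_trans x_g _; rewrite [y]surjective_pairing y2E /mu hxy {y2E}.
elim: n => [|n IH]; first by rewrite expg0 mul1g connect0.
apply: connect_trans IH (connect1 _); rewrite /vstep /vstep1 /= -hxy expgS -mulgA.
by rewrite eqxx !orbT.
Qed.

Lemma connect_vstep_simcls x y : connect vstep x y <->
  hend x.1 = hend y.1 /\ simcls (W : _ -> (V : finGroupType)) (hend x.1) x.1 x.2 y.1 y.2.
Proof.
split => [x_y|[hxy x_y]]; last exact: connect_simstep_vstep.
by split; [rewrite (connect_vstep_hend x_y) | exact: connect_vstep_simstep].
Qed.

Local Notation cedge := (qE B * V)%type.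

Definition lift_of (h : cedge * bool) : lift := ((h.1.1, h.2), h.1.2).
Definition half_of (x : lift) : cedge * bool := ((x.1.1, x.2), x.1.2).

Lemma lift_ofK : cancel lift_of half_of. Proof. by case=> [[e g] b]. Qed.
Lemma half_ofK : cancel half_of lift_of. Proof. by case=> [[e b] g]. Qed.

Definition cend (e : cedge) (b : bool) : cvertex := cvx ((e.1, b), e.2).
Definition csucc (h : cedge * bool) : cedge * bool := half_of (lsucc (lift_of h)).
Definition cmult (v : cvertex) : nat := (qmult B (cbase v) %/ #[omegaV (cbase v)]%g)%N.
Definition cq (e : cedge) (v : cvertex) : K := qq B e.1 (cbase v).

Lemma half_end_cend h : half_end cend h = cvx (lift_of h).
Proof. by []. Qed.

Lemma csucc_inj : injective csucc.
Proof. by move=> a b /(can_inj half_ofK) /lsucc_inj /(can_inj lift_ofK). Qed.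

Lemma csucc_end h : half_end cend (csucc h) = half_end cend h.
Proof.
rewrite !half_end_cend /csucc half_ofK; apply/cvx_eq; rewrite connect_vstep_sym.
by apply: connect1; rewrite /vstep /vstep1 eqxx.
Qed.

Lemma csucc_cycle h h' : half_end cend h = half_end cend h' -> fconnect csucc h h'.
Proof.
rewrite !half_end_cend => /cvx_eq /connect_vstep_fconnect /iter_findex.
set n := findex _ _ _ => iter_n.
have iter_csucc k : iter k csucc h = half_of (iter k lsucc (lift_of h)).
  by elim: k => [|k IH] /=; rewrite ?lift_ofK // IH /csucc half_ofK.
by rewrite -[h']lift_ofK -iter_n -iter_csucc; apply: fconnect_iter.
Qed.

Hypothesis brauer : brauer_weighting (W : _ -> (V : finGroupType)).

Lemma cmult_pos v : (0 < cmult v)%N.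
Proof.
rewrite /cmult divn_gt0 ?order_gt0 //.
by apply: dvdn_leq; [exact: qmult_pos | exact: brauer].
Qed.

(* Over a truncated vertex of Delta, the weighting vanishes and each vertex
   of the cover carries a single lifted half-edge. *)
Lemma truncated_class h0 g : truncated_at (qend B) (qmult B) (hend h0) ->
  forall z, connect vstep (h0, g) z -> z = (h0, g).
Proof.
case/andP => /eqP val1 /eqP m1.
have uniq_h0 h : hend h = hend h0 -> h = h0 := valency1_unique val1.
have om0 : omegaV (hend h0) = 0.
  by have := brauer (hend h0); rewrite m1 dvdn1 order_eq1 => /eqP.
have W0 : W h0 = 0.
  rewrite -om0 omegaVE (big_pred1 h0) // => h /=.
  by apply/eqP/eqP => [/uniq_h0|->].
have s0 : qsucc B h0 = h0 by apply: uniq_h0; rewrite hend_succ.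
have cl : closed vstep (pred1 (h0, g)).
  apply: intro_closed; first exact: connect_vstep_sym.
  move=> a [h g'] + /eqP aE; subst a; rewrite inE /vstep /vstep1 /lsucc /= om0 s0 W0.
  rewrite !addr0 add0r !xpair_eqE.
  case/orP => [/orP[]|/orP[]] /andP[/eqP hE /eqP gE]; rewrite ?hE ?gE ?eqxx //.
    have hh0 : h = h0 by apply: uniq_h0; rewrite -hend_succ -hE.
    by rewrite hh0 s0 W0 addr0 !eqxx.
  by rewrite -hE om0 add0r !eqxx.
by move=> z /(closed_connect cl); rewrite !inE eqxx => /esym/eqP.
Qed.

Lemma truncated_lift e b :
  truncated_at (qend B) (qmult B) (qend B e.1 b) -> truncated_at cend cmult (cend e b).
Proof.
move=> tr; have single := truncated_class (h0 := (e.1, b)) (g := e.2) tr.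
case/andP: tr => _ /eqP m1; apply/andP; split; last first.
  have := brauer (hend (e.1, b)); rewrite m1 dvdn1 => /eqP ord1.
  by rewrite /cmult /cend cbase_cvx m1 ord1.
rewrite /valency; apply/card1P; exists (e, b) => h'; rewrite inE /= half_end_cend.
apply/eqP/eqP => [/cvx_eq|->]; last by [].
rewrite connect_vstep_sym => /single.
by case: h' => [[e1 g1] b1] /= [-> -> ->]; case: (e).
Qed.

Lemma cq_nz e v : inX cend cmult e v -> cq e v != 0.
Proof.
case/and3P => e_v t1 t2; apply: qq_nz; rewrite /inX.
have -> /= : (qend B e.1 true == cbase v) || (qend B e.1 false == cbase v).
  by case/orP: e_v => /eqP <-; rewrite /cend cbase_cvx eqxx ?orbT.
by rewrite (contra (@truncated_lift e true)) // (contra (@truncated_lift e false)).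
Qed.

Lemma lstep_cvx x y : lstep x y -> connect (adjv cend) (cvx x) (cvx y).
Proof.
case/orP => [x_y|/eqP ->]; first by rewrite (proj2 (cvx_eq x y) (connect1 x_y)) connect0.
apply: connect1; apply/existsP; exists (x.1.1, x.2).
by case: x => [[e []] g]; rewrite /cend /= !eqxx ?orbT.
Qed.

Hypothesis lconnected : forall x y : lift, connect lstep x y.

Lemma cconnected (u v : cvertex) : connect (adjv cend) u v.
Proof.
by rewrite -(cvx_val u) -(cvx_val v); apply: (connect_homo lstep_cvx).
Qed.

Lemma cedge_nonempty : (0 < #|{: cedge}|)%N.
Proof. by rewrite card_prod muln_gt0 qE_nonempty; apply/card_gt0P; exists 0. Qed.

Definition cover : QBrauerGraph K :=
  @QBG K _ _ cend csucc cmult cq cedge_nonempty cconnected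
    csucc_inj csucc_end csucc_cycle cmult_pos cq_nz.

Lemma cover_is_covering : is_covering (W : _ -> (V : finGroupType)) cover.
Proof.
exists id; split=> //; first by exists id.
- move=> e1 b1 e2 b2; rewrite /= /cend.
  split=> [/cvx_eq/connect_vstep_simcls //| x_y].
  by apply/cvx_eq/connect_vstep_simcls.
- by move=> e' b; rewrite /= /cmult /cend cbase_cvx.
- by move=> e' b _; rewrite /= /cq /cend cbase_cvx.
Qed.

Lemma cover_step : covering_step B cover.
Proof.
exists (V : finGroupType), W; split => //; last exact: cover_is_covering.
exact: FinRing.zmod_abelian.
Qed.

End CoveringGraph.

Section Connectivity.
Variables (K : fieldType) (B : QBrauerGraph K) (V : finZmodType).
Variable W : qE B * bool -> V.

Local Notation lstep := (lstep W).

Definition lshift (a : V) (x : lift B V) : lift B V := (x.1, a + x.2).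

Lemma connect_lshift a x y : connect lstep x y -> connect lstep (lshift a x) (lshift a y).
Proof.
apply: connect_homo => -[h g] [h' g'] x_y; apply: connect1; move: x_y.
rewrite /lshift /lstep /vstep /vstep1 /lsucc /lflip /= !xpair_eqE.
by rewrite -!addrA ![_ + (a + _)]addrCA !(inj_eq (addrI a)).
Qed.

Lemma connect_lifts h h' : exists c, forall g, connect lstep (h, g) (h', g + c).
Proof.
have same_vertex h1 h2 : hend h1 = hend h2 ->
    exists c, forall g, connect lstep (h1, g) (h2, g + c).
  by case/(same_vertex_lift W) => c hc; exists c => g; apply/connect_vstep_lstep.
suff along_path : forall v, connect (adjv (qend B)) (hend h) v ->
    forall h', hend h' = v -> exists c, forall g, connect lstep (h, g) (h', g + c).
  by apply: (along_path (hend h')) => //; apply: qconnected.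
move=> v /connectP[p p_path ->] {v}; elim/last_ind: p p_path => [|p w IH] /=.
  by move=> _ h2 /esym; apply: same_vertex.
rewrite rcons_path last_rcons => /andP[p_path /existsP[e he]] h2 h2E.
have [b [eb1 eb2]] : exists b, qend B e b = last (hend h) p /\ qend B e (~~ b) = w.
  by case/orP: he => /andP[/eqP e1 /eqP e2]; [exists true | exists false].
have [c1 hc1] := IH p_path (e, b) eb1.
have [c2 hc2] := same_vertex (e, ~~ b) h2 (etrans eb2 (esym h2E)).
exists (c1 + c2) => g; apply: connect_trans (hc1 g) _.
by rewrite addrA; apply: connect_trans (hc2 _); apply: lflip_lstep.
Qed.

Definition fibre (h0 : qE B * bool) : {set V} :=
  [set c | connect lstep (h0, 0) (h0, c)].

Lemma fibre_group_set h0 : group_set (fibre h0 : {set (V : finGroupType)}).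
Proof.
apply/group_setP; split; first by rewrite inE connect0.
move=> x y; rewrite !inE => hx hy; apply: connect_trans hx _.
by have := connect_lshift x hy; rewrite /lshift /= addr0.
Qed.

Lemma fibre_full_connected h0 : (forall c, c \in fibre h0) ->
  forall x y : lift B V, connect lstep x y.
Proof.
move=> full [h g] [h' g'].
have [c1 hc1] := connect_lifts h h0; have [c2 hc2] := connect_lifts h0 h'.
apply: connect_trans (hc1 g) _.
apply: connect_trans (_ : connect lstep (h0, g' - c2) _); last first.
  by have := hc2 (g' - c2); rewrite subrK.
have := full (g' - c2 - (g + c1)); rewrite inE => /(connect_lshift (g + c1)).
by rewrite /lshift /= addr0 [g + c1 + _]addrC subrK.
Qed.

Lemma omega_in_fibre h0 mu : omegaV W mu \in fibre h0.
Proof.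
have [h hmu] := exists_half_edge mu; have [c hc] := connect_lifts h0 h.
rewrite inE; apply: connect_trans (hc 0) _.
apply: connect_trans (_ : connect lstep (h, omegaV W mu + (0 + c)) _).
  by apply: connect1; rewrite /lstep /vstep /vstep1 /= hmu eqxx !orbT.
by rewrite connect_lstep_sym addrA addr0; apply: hc.
Qed.

End Connectivity.

Section Coboundary.
Variables (K : fieldType) (B : QBrauerGraph K) (V : finZmodType).
Variable p : qE B * bool -> V.

Definition coboundary (h : qE B * bool) : V := p (qsucc B h) - p h.

(* The weights around a vertex telescope, so omega_mu = 0. *)
Lemma omega_coboundary mu : omegaV coboundary mu = 0.
Proof.
rewrite omegaVE sumrB [X in _ - X](reindex_inj (@qsucc_inj _ B)) /=.
by rewrite (eq_bigl (fun h => hend (qsucc B h) == mu)) ?subrr // => h; rewrite hend_succ.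
Qed.

Lemma coboundary_brauer : brauer_weighting (coboundary : _ -> (V : finGroupType)).
Proof. by move=> mu; rewrite [omega _ _]omega_coboundary order1 dvd1n. Qed.

Lemma sum_coboundary n h :
  \sum_(k < n) coboundary (iter k (qsucc B) h) = p (iter n (qsucc B) h) - p h.
Proof.
elim: n => [|n IH]; first by rewrite big_ord0 subrr.
by rewrite big_ord_recr /= IH /coboundary addrC addrA subrK.
Qed.

Lemma connect_vstep_coboundary x y : connect (vstep coboundary) x y <->
  hend x.1 = hend y.1 /\ x.2 - p x.1 = y.2 - p y.1.
Proof.
split => [x_y|[hxy gxy]].
  (* vertex of Delta and label minus potential are vstep-invariants *)
  pose inv z := (hend z.1, z.2 - p z.1).
  have inv_step a b : vstep coboundary a b -> inv b = inv a.
    suff step1 u v : vstep1 coboundary u v -> inv v = inv u.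
      by case/orP => /step1.
    case: u v => [h g] [h' g']; rewrite /vstep1 /lsucc /= omega_coboundary add0r.
    case/orP => /eqP[-> ->]; rewrite /inv /= ?hend_succ //.
    by rewrite /coboundary addrA addrAC addrK.
  have cl : closed (vstep coboundary) [pred z | inv z == inv x].
    apply: intro_closed; first exact: connect_vstep_sym.
    by move=> a b /inv_step; rewrite !inE => ->.
  by have := closed_connect cl x_y; rewrite !inE eqxx => /esym/eqP[-> ->].
have /iter_findex : fconnect (qsucc B) x.1 y.1 by rewrite fconnect_hend hxy.
set n := findex _ _ _ => iter_n.
have -> : y = iter n (lsucc coboundary) x.
  rewrite [x]surjective_pairing iter_lsucc sum_coboundary iter_n [y]surjective_pairing.
  by congr (_, _); rewrite /= addrCA gxy addrC subrK.
apply: connect_sub (fconnect_iter _ _ _) => u v /eqP <-; apply: connect1.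
by rewrite /vstep /vstep1 eqxx.
Qed.

Lemma connect_lstep_coboundary e b g e' b' g' :
  qend B e b = qend B e' b' -> g - p (e, b) = g' - p (e', b') ->
  connect (lstep coboundary) ((e, b), g) ((e', b'), g').
Proof. by move=> hE gE; apply/connect_vstep_lstep/connect_vstep_coboundary. Qed.

Hypothesis lconnected : forall x y : lift B V, connect (lstep coboundary) x y.

Definition cobcover : QBrauerGraph K := cover coboundary_brauer lconnected.

Lemma cobcover_end e1 b1 e2 b2 : qend cobcover e1 b1 = qend cobcover e2 b2 <->
  qend B e1.1 b1 = qend B e2.1 b2 /\ e1.2 - p (e1.1, b1) = e2.2 - p (e2.1, b2).
Proof.
rewrite /= /cend; split; first by move=> /cvx_eq /connect_vstep_coboundary.
by move=> h; apply/cvx_eq/connect_vstep_coboundary.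
Qed.

Lemma cobcover_mult v : qmult cobcover v = qmult B (cbase v).
Proof. by rewrite /= /cmult [omegaV _ _]omega_coboundary order1 divn1. Qed.

End Coboundary.

Section KillMultiplicities.
Variables (K : fieldType) (B : QBrauerGraph K).

Definition mlcm : nat := (\big[lcmn/1%N]_(v : qV B) qmult B v)%N.

Lemma mlcm_gt0 : (0 < mlcm)%N.
Proof.
apply: (big_ind (fun x => 0 < x)%N) => // [x y hx hy|v _]; last exact: qmult_pos.
by rewrite lcmn_gt0 hx.
Qed.

Lemma mlcmE : (mlcm.-1).+1 = mlcm. Proof. exact: prednK mlcm_gt0. Qed.

Lemma mult_dvd_mlcm v : (qmult B v %| mlcm)%N.
Proof. exact: (biglcmn_sup v). Qed.

Local Notation ZL := 'I_(mlcm.-1).+1.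

Definition mroot (mu : qV B) : ZL := (Zp1 ^+ (mlcm %/ qmult B mu))%g.

Lemma mroot_order mu : #[(mroot mu : ((ZL : finZmodType) : finGroupType))]%g = qmult B mu.
Proof.
have hd : (mlcm %/ qmult B mu %| (mlcm.-1).+1)%N.
  by rewrite mlcmE; apply/dvdnP; exists (qmult B mu); rewrite mulnC divnK // mult_dvd_mlcm.
rewrite /mroot orderXdiv order_Zp1 // mlcmE.
by rewrite divnA ?mult_dvd_mlcm // mulKn // mlcm_gt0.
Qed.

(* The weighting putting mroot mu on one chosen half-edge at each vertex mu
   and 0 elsewhere, so that omega_mu = mroot mu. *)
Definition mweight (h : qE B * bool) : ZL :=
  if [pick h' | hend h' == hend h] == Some h then mroot (hend h) else 0.

Lemma omega_mweight mu : omegaV mweight mu = mroot mu.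
Proof.
have [h0 [pick_h0 /eqP h0mu]] : exists h0, [pick h | hend h == mu] = Some h0 /\ hend h0 == mu.
  case: pickP => [h0 h0mu|none]; first by exists h0.
  by have [h hmu] := exists_half_edge mu; have := none h; rewrite /= hmu eqxx.
rewrite omegaVE (bigD1 h0) /=; last by rewrite h0mu.
rewrite /mweight h0mu pick_h0 eqxx big1 ?addr0 // => h /andP[/eqP -> hh0].
by rewrite pick_h0 (inj_eq Some_inj) eq_sym (negPf hh0).
Qed.

Lemma mweight_brauer : brauer_weighting (mweight : _ -> ((ZL : finZmodType) : finGroupType)).
Proof. by move=> mu; rewrite [omega _ _]omega_mweight mroot_order. Qed.

(* The fibre subgroup contains each mroot mu, so its order is divisible by
   every m(mu), hence by L: it is all of Z/L. *)
Lemma mweight_connected : forall x y, connect (lstep mweight) x y.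
Proof.
have /card_gt0P [e0 _] := qE_nonempty B.
apply: (fibre_full_connected (h0 := (e0, true))) => c.
pose D := Group (fibre_group_set mweight (e0, true)).
have mroot_D mu : mroot mu \in D by rewrite -omega_mweight; apply: omega_in_fibre.
have mlcm_dvd : (mlcm %| #|D|)%N.
  apply/dvdn_biglcmP => mu _; rewrite -mroot_order; exact: order_dvdG.
suff DT : (D : {set ZL}) = setT by have : c \in D by rewrite DT inE.
rewrite -{1}mlcmE in mlcm_dvd.
by apply/eqP; rewrite eqEcard subsetT cardsT card_ord dvdn_leq ?cardG_gt0.
Qed.

Definition multcover : QBrauerGraph K := cover mweight_brauer mweight_connected.

Lemma multcover_mult v : qmult multcover v = 1%N.
Proof.
by rewrite /= /cmult [omegaV _ _]omega_mweight mroot_order divnn qmult_pos.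
Qed.

End KillMultiplicities.

Section SignedLabels.
Variable n : nat.

Lemma inZpD a b : (inZp a : 'I_n.+1) + inZp b = inZp (a + b).
Proof. by apply: val_inj; rewrite /= modnDm. Qed.

Lemma inZp_eq0 a : (0 < a < n.+1)%N -> (inZp a : 'I_n.+1) != 0.
Proof. by case/andP=> a_gt0 a_lt; rewrite -val_eqE /= modn_small // -lt0n. Qed.

Definition slabel (s : bool) (a : nat) : 'I_n.+1 := if s then inZp a else - inZp a.

Lemma slabel_sum_eq0 s t a b : (0 < a)%N -> (0 < b)%N -> (a + b < n.+1)%N ->
  slabel s a + slabel t b = 0 -> s != t /\ a = b.
Proof.
move=> a_gt0 b_gt0 ab_lt.
have ab_neq0 : (inZp a : 'I_n.+1) + inZp b != 0.
  by rewrite inZpD inZp_eq0 // addn_gt0 a_gt0.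
have small_inj c d : (c <= a + b)%N -> (d <= a + b)%N -> (inZp c : 'I_n.+1) = inZp d -> c = d.
  move=> c_le d_le /(congr1 val) /=.
  by rewrite !modn_small // (leq_ltn_trans _ ab_lt).
have a_le : (a <= a + b)%N := leq_addr b a; have b_le : (b <= a + b)%N := leq_addl a b.
case: s t => -[] /= /eqP; rewrite /slabel.
- by rewrite (negPf ab_neq0).
- by rewrite subr_eq0 => /eqP /small_inj ->.
- by rewrite addrC subr_eq0 => /eqP /small_inj -> //.
- by rewrite -opprD oppr_eq0 (negPf ab_neq0).
Qed.

End SignedLabels.

Section EdgeLabels.
Variables (E : finType) (e0 e1 : E) (sg : E -> bool).

Definition lrank (e : E) : nat := (index e [:: e0, e1 & enum E]).+1.

Definition lbound : nat := #|E|.+3.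

Lemma lrank_gt0 e : (0 < lrank e)%N. Proof. by []. Qed.

Lemma lrank_lt e : (lrank e < lbound)%N.
Proof.
have : (index e [:: e0, e1 & enum E] < size [:: e0, e1 & enum E])%N.
  by rewrite index_mem !in_cons mem_enum !orbT.
by rewrite /lrank /lbound ltnS /= -cardT.
Qed.

Lemma lrank_inj : injective lrank.
Proof.
have in_s e : e \in [:: e0, e1 & enum E] by rewrite !in_cons mem_enum !orbT.
by move=> a b /succn_inj; apply: (index_inj _ (in_s a) (in_s b)).
Qed.

Lemma lrank_e0 : lrank e0 = 1%N.
Proof. by rewrite /lrank /= eqxx. Qed.

Lemma lrank_e1 : e0 != e1 -> lrank e1 = 2%N.
Proof. by move=> e01; rewrite /lrank /= ifN // eqxx. Qed.

Local Notation ZN := 'I_(2 * lbound).+1.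

Lemma lrank_sum_lt a b : (lrank a + lrank b < (2 * lbound).+1)%N.
Proof. by rewrite mul2n -addnn ltnS leq_add // ltnW // lrank_lt. Qed.

Definition label (e : E) : ZN := slabel _ (sg e) (lrank e).

Lemma label_sum_neq0 a b : label a + label b != 0.
Proof.
apply/eqP => /slabel_sum_eq0 []; rewrite ?lrank_gt0 ?lrank_sum_lt //.
by move=> sab /lrank_inj ab; rewrite ab eqxx in sab.
Qed.

Lemma label_inj : injective label.
Proof.
move=> a b ab; have : label a + slabel _ (~~ sg b) (lrank b) = 0.
  by rewrite ab /label /slabel; case: (sg b); rewrite /= ?subrr ?addNr.
by case/slabel_sum_eq0; rewrite ?lrank_gt0 ?lrank_sum_lt // => _ /lrank_inj.
Qed.

End EdgeLabels.

Section SimpleCover.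
Variables (K : fieldType) (B : QBrauerGraph K) (e0 e1 : qE B) (sg : qE B -> bool).

Local Notation ZN := 'I_(2 * lbound (qE B)).+1.

Definition epot (h : qE B * bool) : ZN := if h.2 then label e0 e1 sg h.1 else 0.

Lemma label_e0 : sg e0 -> label e0 e1 sg e0 = inZp 1.
Proof. by move=> sg_e0; rewrite /label sg_e0 lrank_e0. Qed.

Lemma loop_one_in_fibre : qend B e0 true = qend B e0 false -> sg e0 ->
  inZp 1 \in fibre (coboundary epot) (e0, true).
Proof.
move=> loop sg_e0; rewrite inE; apply: connect_trans (lflip_lstep _ e0 true 0) _.
by apply: connect_lstep_coboundary => //=; rewrite /epot label_e0 //= subr0 subrr.
Qed.

Lemma parallel_one_in_fibre b : e0 != e1 ->
  qend B e0 true = qend B e1 b -> qend B e0 false = qend B e1 (~~ b) ->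
  sg e0 -> sg e1 = b -> inZp 1 \in fibre (coboundary epot) (e0, true).
Proof.
move=> e01 end_t end_f sg_e0 sg_e1.
have pot_e1 : epot (e1, b) - epot (e1, ~~ b) = inZp 2.
  by rewrite /epot /label /slabel sg_e1 lrank_e1 //; case: (b); rewrite /= ?subr0 ?sub0r ?opprK.
rewrite inE; apply: connect_trans (_ : connect _ _ ((e1, b), epot (e1, b) - inZp 1)) _.
  by apply: connect_lstep_coboundary => //=; rewrite {1}/epot label_e0 // addrAC subrr sub0r.
apply: connect_trans (lflip_lstep _ e1 b _) _.
apply: connect_trans (_ : connect _ _ ((e0, false), inZp 1)) _; last exact: lflip_lstep.
apply: connect_lstep_coboundary => //=; rewrite /epot /= subr0.
by rewrite addrAC pot_e1; apply/eqP; rewrite subr_eq inZpD.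
Qed.

Hypothesis one_in_fibre : inZp 1 \in fibre (coboundary epot) (e0, true).

(* 1 generates Z/N, so the fibre subgroup is everything. *)
Lemma epot_connected : forall x y, connect (lstep (coboundary epot)) x y.
Proof.
apply: (fibre_full_connected (h0 := (e0, true))) => c.
pose D := Group (fibre_group_set (coboundary epot) (e0, true)).
by rewrite -[c]Zp1_expgz; apply: (@groupX _ D).
Qed.

Definition simplecover : QBrauerGraph K := cobcover epot_connected.

(* The two ends of the edge (i, g) lie over the classes of g - label i and g. *)
Lemma simplecover_no_loops : no_loops simplecover.
Proof.
move=> [e g]; apply/eqP => /cobcover_end [_]; rewrite /epot /= subr0.
rewrite -{2}[g]addr0 => /addrI /eqP; rewrite oppr_eq0 => /eqP l0.
by have := label_sum_neq0 e0 e1 sg e e; rewrite l0 addr0 eqxx.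
Qed.

(* Parallel lifted edges would have equal labels, antiparallel ones labels
   summing to zero. *)
Lemma simplecover_no_multiple_edges : no_multiple_edges simplecover.
Proof.
case=> [a ga] [b gb] ab; apply/negP.
case/orP => /andP[/eqP /cobcover_end [_ h1] /eqP /cobcover_end [_ h2]];
  move: h1 h2; rewrite /epot /= ?subr0 => h1 h2.
  subst gb; move/addrI/oppr_inj/label_inj: h1 => a_b.
  by rewrite a_b eqxx in ab.
have : ga + 0 = ga - (label e0 e1 sg a + label e0 e1 sg b).
  by rewrite addr0 opprD addrA h1 -h2.
by move/addrI/esym/eqP; rewrite oppr_eq0 (negPf (label_sum_neq0 _ _ _ a b)).
Qed.

Lemma simplecover_simple : (forall v, qmult B v = 1%N) ->
  [/\ (forall v : qV simplecover, qmult simplecover v = 1%N),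
      no_loops simplecover & no_multiple_edges simplecover].
Proof.
move=> m1; split; [by move=> v; rewrite cobcover_mult m1 | exact: simplecover_no_loops
                  | exact: simplecover_no_multiple_edges].
Qed.

End SimpleCover.

Section TrivialCover.
Variables (K : fieldType) (B : QBrauerGraph K).

Definition zero_pot (h : qE B * bool) : 'I_1 := 0.

Lemma zero_pot_connected : forall x y, connect (lstep (coboundary zero_pot)) x y.
Proof.
have /card_gt0P [e0 _] := qE_nonempty B.
by apply: (fibre_full_connected (h0 := (e0, true))) => c; rewrite [c]ord1 inE connect0.
Qed.

Definition trivcover : QBrauerGraph K := cobcover zero_pot_connected.

Lemma trivcover_end e1 b1 e2 b2 : qend trivcover e1 b1 = qend trivcover e2 b2 <->
  qend B e1.1 b1 = qend B e2.1 b2.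
Proof.
split; first by case/cobcover_end.
by move=> h; apply/cobcover_end; split => //; rewrite [LHS]ord1 [RHS]ord1.
Qed.

Lemma trivcover_no_loops : no_loops B -> no_loops trivcover.
Proof. by move=> nl e; apply/eqP => /trivcover_end /eqP; rewrite (negPf (nl _)). Qed.

Lemma trivcover_no_multiple_edges : no_multiple_edges B -> no_multiple_edges trivcover.
Proof.
move=> nm [a ga] [b gb] ab.
have a_b : a != b by apply: contraNneq ab => ->; rewrite [ga]ord1 [gb]ord1.
apply: contra (nm a b a_b).
by case/orP => /andP[/eqP /trivcover_end /= -> /eqP /trivcover_end /= ->]; rewrite !eqxx ?orbT.
Qed.

End TrivialCover.

Definition parallel_edges (K : fieldType) (B : QBrauerGraph K) (e0 e1 : qE B) (b : bool) :=
  [&& e0 != e1, qend B e0 true == qend B e1 b & qend B e0 false == qend B e1 (~~ b)].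

Lemma no_parallel_edges (K : fieldType) (B : QBrauerGraph K) :
  ~~ [exists e0 : qE B, exists e1, exists b, parallel_edges e0 e1 b] -> no_multiple_edges B.
Proof.
move=> no_par a b ab; apply: contraNN no_par.
case/orP => /andP[end_t end_f]; apply/existsP; exists a; apply/existsP; exists b.
  by apply/existsP; exists true; rewrite /parallel_edges ab end_t end_f.
by apply/existsP; exists false; rewrite /parallel_edges ab end_t end_f.
Qed.

(* If it has a loop, or two parallel
   edges, the labelled potential gives a connected cover; otherwise the
   graph is already simple and the trivial cover is used. *)
Lemma simple_cover_exists (K : fieldType) (B : QBrauerGraph K) :
  (forall v, qmult B v = 1%N) ->
  exists B' : QBrauerGraph K, covering_step B B' /\
    [/\ (forall v : qV B', qmult B' v = 1%N), no_loops B' & no_multiple_edges B'].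
Proof.
move=> m1.
have from_label (e0 e1 : qE B) (sg : qE B -> bool) :
    inZp 1 \in fibre (coboundary (epot e0 e1 sg)) (e0, true) ->
    exists B' : QBrauerGraph K, covering_step B B' /\
      [/\ (forall v : qV B', qmult B' v = 1%N), no_loops B' & no_multiple_edges B'].
  by move=> one; exists (simplecover one); split; [exact: cover_step | exact: simplecover_simple].
have [/existsP[e0 /eqP loop] | no_loop] := boolP [exists e, qend B e true == qend B e false].
  by apply: (from_label e0 e0 (fun _ => true)); apply: loop_one_in_fibre.
have [/existsP[e0 /existsP[e1 /existsP[b /and3P[e01 /eqP end_t /eqP end_f]]]] | no_par] :=
    boolP [exists e0 : qE B, exists e1, exists b, parallel_edges e0 e1 b].
  apply: (from_label e0 e1 (fun e => (e != e1) || b)).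
  by apply: (parallel_one_in_fibre (b := b)); rewrite //= ?e01 // eqxx.
exists (trivcover B); split; first exact: cover_step.
split; [by move=> v; rewrite cobcover_mult m1 | apply: trivcover_no_loops | ].
  by move=> e; apply: contraNN no_loop => loop; apply/existsP; exists e.
exact/trivcover_no_multiple_edges/no_parallel_edges.
Qed.

Theorem theorem6p7 (K : fieldType) (B0 : QBrauerGraph K) :
  exists B1 B2 B3 : QBrauerGraph K,
    [/\ covering_step B0 B1, covering_step B1 B2 & covering_step B2 B3] /\
    [/\ (forall v : qV B3, qmult B3 v = 1%N),
        no_loops B3 & no_multiple_edges B3].
Proof.
pose B1 := multcover B0; pose B2 := trivcover B1.
have m2 v : qmult B2 v = 1%N by rewrite cobcover_mult multcover_mult.
have [B3 [step3 props]] := simple_cover_exists m2.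
by exists B1, B2, B3; split=> //; split=> //; exact: cover_step.
Qed.
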